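(* Let $\Sigma$, $\mathcal I$, $P$ and $R(\cdot)$ be as follows: $\Sigma\subseteq\mathcal L_\Diamond$ is finite and closed under subformulas; $\mathcal I$ is a finite weak $\Sigma$-quasimodel such that for every deterministic weak $\mathcal L_\Diamond$-quasimodel $\mathcal A$ the relation $\rightharpoonup\ \subseteq|\mathcal I|\times|\mathcal A|$ is a surjective dynamic simulation; $P=\{w\in|\mathcal I|:\not\vdash\mathrm{Sim}(w)\}$; and $R(w)$ is the set of $v\in P$ reachable from $w$ by a finite $S_{\mathcal I}$-path all of whose elements lie in $P$. If $w\in P$ and $\Diamond\psi\in\ell^+(w)$, then there is $v\in R(w)$ with $\psi\in\ell^+(v)$.
   Context: $\mathcal L_\Diamond$ is the propositional language with $\bot,\wedge,\vee,\to$ and unary modalities $\bigcirc$, $\Diamond$. ${\sf ITL}^0_\Diamond$ is axiomatized by all intuitionistic propositional tautologies, $\neg\bigcirc\bot$, $\bigcirc\varphi\wedge\bigcirc\psi\to\bigcirc(\varphi\wedge\psi)$, $\bigcirc(\varphi\vee\psi)\to\bigcirc\varphi\vee\bigcirc\psi$, $\bigcirc(\varphi\to\psi)\to(\bigcirc\varphi\to\bigcirc\psi)$, $\varphi\vee\bigcirc\Diamond\varphi\to\Diamond\varphi$, closed under modus ponens and the rules $\varphi/\bigcirc\varphi$, $(\varphi\to\psi)/(\Diamond\varphi\to\Diamond\psi)$, $(\bigcirc\varphi\to\varphi)/(\Diamond\varphi\to\varphi)$; $\vdash\varphi$ means $\varphi\in{\sf ITL}^0_\Diamond$. A path $u_0,\dots,u_n$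 ($n\ge0$) is an $S_{\mathcal I}$-path if $u_i\,S_{\mathcal I}\,u_{i+1}$ for $i<n$. Types: a $\Sigma$-type is a pair $\Phi=(\Phi^-;\Phi^+)$ of subsets of $\Sigma$ with $\Phi^-\cap\Phi^+=\varnothing$, $\Phi^-\cup\Phi^+=\Sigma$, $\bot\notin\Phi^+$, $\wedge,\vee$ in $\Phi^+$ behaving classically, ($\varphi\to\psi\in\Phi^+\Rightarrow\varphi\in\Phi^-$ or $\psi\in\Phi^+$), ($\Diamond\varphi\in\Phi^-\Rightarrow\varphi\in\Phi^-$). $\Phi\preccurlyeq_T\Psi$ iff $\Phi^+\subseteq\Psi^+$; $\Phi\subseteq_T\Psi$ iff $\Phi^-\subseteq\Psi^-$, $\Phi^+\subseteq\Psi^+$. $\Phi\,S_T\,\Psi$ iff: $\bigcirc\varphi\in\Phi^+\Rightarrow\varphi\in\Psi^+$; $\bigcirc\varphi\in\Phi^-\Rightarrow\varphi\in\Psi^-$; ($\Diamond\varphi\in\Phi^+$, $\varphi\in\Phi^-$)$\Rightarrow\Diamond\varphi\in\Psi^+$; $\Diamond\varphi\in\Phi^-\Rightarrow\Diamond\varphi\in\Psi^-$. A $\Sigma$-labelled frame is $(W,\preccurlyeq,\ell)$, $\preccurlyeq$ a partial order, $\ell$ mapping to $\Sigma$-types, monotone w.r.t. $\preccurlyeq_T$, and if $\varphi\to\psi\in\ell^-(w)$ then some $v\succcurlyeq w$ has $\varphi\in\ell^+(v)$, $\psi\in\ell^-(v)$. A weak $\Sigma$-quasimodel adds $S\subseteq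 W\times W$ forward-confluent (if $w\preccurlyeq w'$, $w\,S\,v$ then some $v'\succcurlyeq v$ has $w'\,S\,v'$) and sensible ($w\,S\,v\Rightarrow\ell(w)\,S_T\,\ell(v)$); deterministic if $S$ is a function. A simulation from a $\Sigma$-labelled $\mathcal X$ to a $\Delta$-labelled $\mathcal Y$ ($\Sigma\subseteq\Delta$) is a forward-confluent $E\subseteq|\mathcal X|\times|\mathcal Y|$ with $x\,E\,y\Rightarrow\ell(x)\subseteq_T\ell(y)$; $x\rightharpoonup y$ iff some simulation relates them; $E$ is dynamic if $x\,E\,y$ and $y\,S\,y'$ imply some $x'$ with $x\,S\,x'$, $x'\,E\,y'$; surjective if every point of $\mathcal A$ is in its range. $\mathrm{Sim}(w)=\bigwedge\ell^+(w)\to\big(\bigvee\ell^-(w)\vee\bigvee_{v\succ w}\mathrm{Sim}(v)\big)$, defined by backwards induction on $\prec$ ($\bigwedge\varnothing=\top$, $\bigvee\varnothing=\bot$). *)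

From Stdlib Require List.
From mathcomp Require Import all_boot.
Set Implicit Arguments.
Unset Strict Implicit.
Unset Printing Implicit Defensive.

Inductive form : Type :=
| FVar  : nat -> form
| FBot  : form
| FAnd  : form -> form -> form
| FOr   : form -> form -> form
| FImp  : form -> form -> form
| FNext : form -> form
| FDia  : form -> form.

Definition FNeg (p : form) : form := FImp p FBot.
Definition FTop : form := FImp FBot FBot.

Inductive ITL : form -> Prop :=
| ax_K   p q     : ITL (FImp p (FImp q p))
| ax_S   p q r   : ITL (FImp (FImp p (FImp q r)) (FImp (FImp p q) (FImp p r)))
| ax_AndI p q    : ITL (FImp p (FImp q (FAnd p q)))
| ax_AndE1 p q   : ITL (FImp (FAnd p q) p)
| ax_AndE2 p q   : ITL (FImp (FAnd p q) q)
| ax_OrI1 p q    : ITL (FImp p (FOr p q))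
| ax_OrI2 p q    : ITL (FImp q (FOr p q))
| ax_OrE p q r   : ITL (FImp (FImp p r) (FImp (FImp q r) (FImp (FOr p q) r)))
| ax_EFQ p       : ITL (FImp FBot p)
| ax_NextBot     : ITL (FNeg (FNext FBot))
| ax_NextAnd p q : ITL (FImp (FAnd (FNext p) (FNext q)) (FNext (FAnd p q)))
| ax_NextOr p q  : ITL (FImp (FNext (FOr p q)) (FOr (FNext p) (FNext q)))
| ax_NextK p q   : ITL (FImp (FNext (FImp p q)) (FImp (FNext p) (FNext q)))
| ax_DiaFix p    : ITL (FImp (FOr p (FNext (FDia p))) (FDia p))
| r_MP p q       : ITL (FImp p q) -> ITL p -> ITL q
| r_Nec p        : ITL p -> ITL (FNext p)
| r_DiaMono p q  : ITL (FImp p q) -> ITL (FImp (FDia p) (FDia q))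
| r_DiaInd p     : ITL (FImp (FNext p) p) -> ITL (FImp (FDia p) p).

Definition subformula_closed (Sig : seq form) : Prop :=
  forall p, List.In p Sig ->
    match p with
    | FAnd a b | FOr a b | FImp a b => List.In a Sig /\ List.In b Sig
    | FNext a | FDia a => List.In a Sig
    | _ => True
    end.

Definition is_type (Sig : form -> Prop) (neg pos : form -> bool) : Prop :=
  [/\ (forall p, ~ (neg p /\ pos p)),
      (forall p, Sig p <-> (neg p \/ pos p)),
      ~ pos FBot
    & (forall p q, Sig (FAnd p q) -> (pos (FAnd p q) <-> (pos p /\ pos q)))] /\
  [/\
      (forall p q, Sig (FOr p q) -> (pos (FOr p q) <-> (pos p \/ pos q))),
      (forall p q, pos (FImp p q) -> neg p \/ pos q)
    & (forall p, neg (FDia p) -> neg p)].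

Definition S_T (negF posF negP posP : form -> bool) : Prop :=
  [/\ (forall p, posF (FNext p) -> posP p),
      (forall p, negF (FNext p) -> negP p),
      (forall p, posF (FDia p) -> negF p -> posP (FDia p))
    & (forall p, negF (FDia p) -> negP (FDia p))].

Definition labelled_frame (Sig : form -> Prop) (W : Type)
    (le : W -> W -> Prop) (neg pos : W -> form -> bool) : Prop :=
  [/\ (forall w, le w w),
      (forall w v, le w v -> le v w -> w = v)
    & (forall w v u, le w v -> le v u -> le w u)] /\
  [/\
      (forall w, is_type Sig (neg w) (pos w)),
      (forall w v p, le w v -> pos w p -> pos v p)
    & (forall w p q, neg w (FImp p q) ->
         exists v, [/\ le w v, pos v p & neg v q])].

Definition forward_confluent (W : Type) (le S : W -> W -> Prop) : Prop :=
  forall w w' v, le w w' -> S w v -> exists v', le v v' /\ S w' v'.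

Definition weak_quasimodel (Sig : form -> Prop) (W : Type)
    (le S : W -> W -> Prop) (neg pos : W -> form -> bool) : Prop :=
  [/\ labelled_frame Sig le neg pos,
      forward_confluent le S
    & (forall w v, S w v -> S_T (neg w) (pos w) (neg v) (pos v))].

Definition deterministic (W : Type) (S : W -> W -> Prop) : Prop :=
  forall w, exists v, S w v /\ forall v', S w v' -> v' = v.

Definition LDia : form -> Prop := fun _ => True.

Definition simulation (X Y : Type) (leX : X -> X -> Prop)
    (negX posX : X -> form -> bool) (leY : Y -> Y -> Prop)
    (negY posY : Y -> form -> bool) (E : X -> Y -> Prop) : Prop :=
  (forall x x' y, E x y -> leX x x' -> exists y', leY y y' /\ E x' y') /\
  (forall x y, E x y ->
     (forall p, negX x p -> negY y p) /\ (forall p, posX x p -> posY y p)).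

Definition simulates (X Y : Type) (leX : X -> X -> Prop)
    (negX posX : X -> form -> bool) (leY : Y -> Y -> Prop)
    (negY posY : Y -> form -> bool) (x : X) (y : Y) : Prop :=
  exists E, simulation leX negX posX leY negY posY E /\ E x y.

Definition dynamic (X Y : Type) (SX : X -> X -> Prop) (SY : Y -> Y -> Prop)
    (E : X -> Y -> Prop) : Prop :=
  forall x y y', E x y -> SY y y' -> exists x', SX x x' /\ E x' y'.

Definition surjective_rel (X Y : Type) (E : X -> Y -> Prop) : Prop :=
  forall y, exists x, E x y.

(* Sim(w) for a finite frame, by backwards induction on the strict     *)
(* order.  We use fuel #|W|: since strict chains have length < #|W|,   *)
(* the base case (fuel 0) is never reached.                            *)
Definition bigAnd (l : seq form) : form := foldr FAnd FTop l.
Definition bigOr (l : seq form) : form := foldr FOr FBot l.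

Section SimDef.
Variables (W : finType) (Sig : seq form) (le : rel W) (neg pos : W -> form -> bool).

Fixpoint simN (n : nat) (w : W) : form :=
  match n with
  | 0 => FTop
  | n'.+1 =>
      FImp (bigAnd (filter (pos w) Sig))
           (FOr (bigOr (filter (neg w) Sig))
                (bigOr [seq simN n' v | v <- enum W & le w v && (v != w)]))
  end.

Definition Sim (w : W) : form := simN #|W| w.

End SimDef.

Definition Pset (W : finType) (Sig : seq form) (le : rel W)
    (neg pos : W -> form -> bool) (w : W) : Prop :=
  ~ ITL (Sim Sig le neg pos w).

Inductive reachIn (W : Type) (P : W -> Prop) (S : W -> W -> Prop) (w : W)
    : W -> Prop :=
| reach_refl : P w -> reachIn P S w w
| reach_step u v : reachIn P S w u -> S u v -> P v -> reachIn P S w v.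

From HB Require Import structures.
From Stdlib Require List.
From mathcomp Require Import all_boot.
From mathcomp Require Import boolp.
Set Implicit Arguments.
Unset Strict Implicit.
Unset Printing Implicit Defensive.

(* The prime theories of ITL^0_Diamond, ordered by inclusion and with successor
   [G |-> {p | o p \in G}], form a deterministic weak quasimodel, so by
   hypothesis every point of I simulates dynamically into it.  A point [x]
   simulates into some prime theory iff [Sim x] is not derivable, and [Sim x]
   lies outside every theory that [x] simulates into.  If [psi] held at no
   point of [R w], the conjunction [phi] of the [Sim v], [v \in R w], would
   satisfy |- psi -> phi and |- o phi -> phi (a counter-theory to either is
   simulated by some [v \in R w], and dynamicity keeps us inside [R w]); the
   induction rule then gives |- <>psi -> phi.  But a theory simulated by [w]
   contains <>psi, hence [phi] and [Sim w], which is impossible. *)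

Fixpoint form_to_tree (p : form) : GenTree.tree nat :=
  match p with
  | FVar n => GenTree.Leaf n
  | FBot => GenTree.Node 0 [::]
  | FAnd a b => GenTree.Node 1 [:: form_to_tree a; form_to_tree b]
  | FOr a b => GenTree.Node 2 [:: form_to_tree a; form_to_tree b]
  | FImp a b => GenTree.Node 3 [:: form_to_tree a; form_to_tree b]
  | FNext a => GenTree.Node 4 [:: form_to_tree a]
  | FDia a => GenTree.Node 5 [:: form_to_tree a]
  end.

Fixpoint tree_to_form (t : GenTree.tree nat) : form :=
  match t with
  | GenTree.Leaf n => FVar n
  | GenTree.Node 1 [:: a; b] => FAnd (tree_to_form a) (tree_to_form b)
  | GenTree.Node 2 [:: a; b] => FOr (tree_to_form a) (tree_to_form b)
  | GenTree.Node 3 [:: a; b] => FImp (tree_to_form a) (tree_to_form b)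
  | GenTree.Node 4 [:: a] => FNext (tree_to_form a)
  | GenTree.Node 5 [:: a] => FDia (tree_to_form a)
  | _ => FBot
  end.

Lemma form_to_treeK : cancel form_to_tree tree_to_form.
Proof. by elim=> //= [a -> b ->|a -> b ->|a -> b ->|a ->|a ->]. Qed.

HB.instance Definition _ := Countable.copy form (can_type form_to_treeK).

Lemma InP (T : eqType) (x : T) (s : seq T) : reflect (List.In x s) (x \in s).
Proof.
elim: s => [|y s IH] /=; first by right.
rewrite in_cons; apply: (iffP orP) => [[/eqP->|/IH]|[->|/IH]]; by [left|right].
Qed.

(** * Derivability in ITL^0_Diamond *)

Lemma ITL_imp_refl a : ITL (FImp a a).
Proof. exact: r_MP (r_MP (ax_S a (FImp a a) a) (ax_K a (FImp a a))) (ax_K a a). Qed.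

Inductive derivable (G : form -> Prop) : form -> Prop :=
| der_thm p : ITL p -> derivable G p
| der_hyp p : G p -> derivable G p
| der_mp p q : derivable G (FImp p q) -> derivable G p -> derivable G q.
Arguments der_thm {G p}.
Arguments der_hyp {G p}.
Arguments der_mp {G p q}.

Lemma derivable_sub (G G' : form -> Prop) p :
  (forall q, G q -> G' q) -> derivable G p -> derivable G' p.
Proof.
move=> GG'; elim=> [q /der_thm|q /GG' /der_hyp|q r _ IHqr _ IHq] //.
exact: der_mp IHqr IHq.
Qed.

Lemma derivable_ITL (G : form -> Prop) p :
  (forall q, G q -> ITL q) -> derivable G p -> ITL p.
Proof. by move=> GI; elim=> [q|q /GI|q r _ IHqr _ IHq] //; exact: r_MP IHqr IHq. Qed.

Lemma deduction (G : form -> Prop) a p :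
  derivable (fun q => G q \/ q = a) p -> derivable G (FImp a p).
Proof.
elim=> [q Hq|q [Hq|->]|q r _ IHqr _ IHq].
- exact: der_mp (der_thm (ax_K q a)) (der_thm Hq).
- exact: der_mp (der_thm (ax_K q a)) (der_hyp Hq).
- exact: der_thm (ITL_imp_refl a).
- exact: der_mp (der_mp (der_thm (ax_S a q r)) IHqr) IHq.
Qed.

Lemma ITL_imp_trans a b c : ITL (FImp a b) -> ITL (FImp b c) -> ITL (FImp a c).
Proof.
move=> ab bc; apply: (@derivable_ITL (fun _ => False)) => //; apply: deduction.
apply: der_mp (der_thm bc) _; apply: der_mp (der_thm ab) _.
by apply: der_hyp; right.
Qed.

Lemma ITL_next_imp a b : ITL (FImp a b) -> ITL (FImp (FNext a) (FNext b)).
Proof. by move=> ab; apply: r_MP (ax_NextK a b) (r_Nec ab). Qed.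

Lemma ITL_dia_intro p : ITL (FImp p (FDia p)).
Proof. exact: ITL_imp_trans (ax_OrI1 _ _) (ax_DiaFix p). Qed.

Lemma ITL_next_dia p : ITL (FImp (FNext (FDia p)) (FDia p)).
Proof. exact: ITL_imp_trans (ax_OrI2 _ _) (ax_DiaFix p). Qed.

(* The converse of [ax_DiaFix]: [p \/ o<>p] is closed under [o], so the induction rule applies. *)
Lemma ITL_dia_unfold p : ITL (FImp (FDia p) (FOr p (FNext (FDia p)))).
Proof.
set chi := FOr p (FNext (FDia p)).
have next_chi : ITL (FImp (FNext chi) chi).
  apply: ITL_imp_trans (ax_NextOr _ _) _; apply: r_MP (r_MP (ax_OrE _ _ chi) _) _.
  - exact: ITL_imp_trans (ITL_next_imp (ITL_dia_intro p)) (ax_OrI2 _ _).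
  - exact: ITL_imp_trans (ITL_next_imp (ITL_next_dia p)) (ax_OrI2 _ _).
exact: ITL_imp_trans (r_DiaMono (ax_OrI1 p (FNext (FDia p)))) (r_DiaInd next_chi).
Qed.

(** * Prime theories and Lindenbaum's lemma *)

Definition prime_theory (G : form -> Prop) : Prop :=
  [/\ forall p, derivable G p -> G p, ~ G FBot
    & forall a b, G (FOr a b) -> G a \/ G b].

Section PrimeTheory.
Variables (G : form -> Prop) (HG : prime_theory G).

Lemma theory_derivable p : derivable G p -> G p.
Proof. by case: HG => G_closed _ _ /G_closed. Qed.

Lemma theory_ITL p : ITL p -> G p.
Proof. by move/der_thm/theory_derivable. Qed.

Lemma theory_mp a b : G (FImp a b) -> G a -> G b.
Proof. by move=> ab a_in; apply/theory_derivable/(der_mp (der_hyp ab) (der_hyp a_in)). Qed.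

Lemma theory_ITL_imp a b : ITL (FImp a b) -> G a -> G b.
Proof. by move/theory_ITL; apply: theory_mp. Qed.

Lemma theory_and a b : G (FAnd a b) <-> G a /\ G b.
Proof.
split=> [ab|[a_in b_in]]; last exact: theory_mp (theory_ITL_imp (ax_AndI a b) a_in) b_in.
by split; apply: theory_ITL_imp ab; [apply: ax_AndE1|apply: ax_AndE2].
Qed.

Lemma theory_or a b : G (FOr a b) <-> G a \/ G b.
Proof.
split=> [|[]]; first by case: HG => _ _; apply.
- exact: theory_ITL_imp (ax_OrI1 a b).
- exact: theory_ITL_imp (ax_OrI2 a b).
Qed.

Lemma theory_bigAnd L : G (bigAnd L) <-> {in L, forall p, G p}.
Proof.
elim: L => [|a L IH] /=; first by split=> // _; apply/theory_ITL/ax_EFQ.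
rewrite theory_and IH; split=> [[a_in L_in] p|L_in].
  by rewrite in_cons => /orP[/eqP->|/L_in].
by split=> [|p p_in]; apply: L_in; rewrite in_cons ?eqxx ?p_in ?orbT.
Qed.

Lemma theory_bigOr L : G (bigOr L) <-> exists2 p, p \in L & G p.
Proof.
elim: L => [|a L IH] /=; first by split=> [|[]//]; case: HG.
rewrite theory_or IH; split=> [[a_in|[p p_in Gp]]|[p]].
- by exists a; rewrite ?mem_head.
- by exists p; rewrite ?in_cons ?p_in ?orbT.
- by rewrite in_cons => /orP[/eqP->|p_in Gp]; [left|right; exists p].
Qed.

Lemma theory_next : prime_theory (fun p => G (FNext p)).
Proof.
split.
- move=> p; elim=> [q /r_Nec/theory_ITL|q|q r _ IHqr _ IHq] //.
  exact: theory_mp (theory_ITL_imp (ax_NextK q r) IHqr) IHq.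
- by case: HG => _ noBot _ /(theory_mp (theory_ITL ax_NextBot)).
- by move=> a b /(theory_ITL_imp (ax_NextOr a b))/theory_or.
Qed.

End PrimeTheory.

Definition nth_form (n : nat) : form := odflt FBot (unpickle n).

Lemma nth_form_pickle p : nth_form (pickle p) = p.
Proof. by rewrite /nth_form pickleK. Qed.

Section Lindenbaum.
Variables (G0 : form -> Prop) (b : form).

Fixpoint lind_chain (n : nat) : form -> Prop :=
  match n with
  | 0 => G0
  | n.+1 => fun q => lind_chain n q \/
      (q = nth_form n /\ ~ derivable (fun r => lind_chain n r \/ r = nth_form n) b)
  end.

Definition lind_limit (q : form) : Prop := exists n, lind_chain n q.

Lemma lind_chain_mono m n q : m <= n -> lind_chain m q -> lind_chain n q.
Proof. by move/subnK <-; elim: (n - m) => [|k IH] //= /IH; left. Qed.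

Lemma derivable_lind_limit p :
  derivable lind_limit p -> exists n, derivable (lind_chain n) p.
Proof.
elim=> [q /der_thm|q [n /der_hyp]|q r _ [m IHqr] _ [n IHq]]; [by exists 0|by exists n|].
exists (maxn m n); apply: der_mp.
- by apply: derivable_sub IHqr => s; apply/lind_chain_mono/leq_maxl.
- by apply: derivable_sub IHq => s; apply/lind_chain_mono/leq_maxr.
Qed.

Hypothesis G0_b : ~ derivable G0 b.

Lemma lind_chain_underivable n : ~ derivable (lind_chain n) b.
Proof.
elim: n => [|n IH] //=.
case: (pselect (derivable (fun r => lind_chain n r \/ r = nth_form n) b)) => [db|nb].
- by apply: contra_not IH; apply: derivable_sub => q [//|[_ /(_ db)]].
- by apply: contra_not nb; apply: derivable_sub => q [|[-> _]]; [left|right].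
Qed.

Lemma lind_limit_underivable : ~ derivable lind_limit b.
Proof. by case/derivable_lind_limit => n /lind_chain_underivable. Qed.

Lemma lind_limit_maximal q : ~ lind_limit q -> derivable lind_limit (FImp q b).
Proof.
move=> q_out; apply: deduction.
have : derivable (fun r => lind_chain (pickle q) r \/ r = nth_form (pickle q)) b.
  apply: contrapT => nb; apply: q_out; exists (pickle q).+1.
  by right; split=> //; rewrite nth_form_pickle.
by apply: derivable_sub => r [r_in|->]; [left; exists (pickle q)|right; rewrite nth_form_pickle].
Qed.

Lemma lind_limit_prime : prime_theory lind_limit.
Proof.
have refute q : ~ lind_limit q -> derivable lind_limit q -> False.
  by move=> /lind_limit_maximal qb /(der_mp qb) /lind_limit_underivable.
split.
- by move=> p dp; apply: contrapT => /refute; apply.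
- by move=> bot; apply: lind_limit_underivable; apply: der_mp (der_thm (ax_EFQ b)) (der_hyp bot).
- move=> a c ac; case: (pselect (lind_limit a)) => [|/lind_limit_maximal ab]; first by left.
  case: (pselect (lind_limit c)) => [|/lind_limit_maximal cb]; first by right.
  case: lind_limit_underivable.
  exact: der_mp (der_mp (der_mp (der_thm (ax_OrE a c b)) ab) cb) (der_hyp ac).
Qed.

End Lindenbaum.

Lemma lindenbaum (G0 : form -> Prop) b : ~ derivable G0 b ->
  exists D, [/\ prime_theory D, forall p, G0 p -> D p & ~ D b].
Proof.
move=> G0_b; exists (lind_limit G0 b); split; first exact: lind_limit_prime.
- by move=> p p_in; exists 0.
- by move/der_hyp; apply: lind_limit_underivable.
Qed.

(** * The canonical model *)

Record ptheory := PTheory {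
  ptmem :> form -> bool;
  ptheoryP : prime_theory (fun p => ptmem p)
}.

Definition pt_le (G D : ptheory) : Prop := forall p, G p -> D p.
Definition pt_neg (G : ptheory) (p : form) : bool := ~~ G p.
Definition pt_shift (G : ptheory) : ptheory :=
  @PTheory (fun p => G (FNext p)) (theory_next (ptheoryP G)).
Definition pt_succ (G D : ptheory) : Prop := D = pt_shift G.

Lemma ptheory_extension (G0 : form -> Prop) b :
  ~ derivable G0 b -> exists D : ptheory, (forall p, G0 p -> D p) /\ ~~ D b.
Proof.
case/lindenbaum => D [DP G0D Db].
have DP' : prime_theory (fun p => `[< D p >]).
  by rewrite (_ : (fun p => _) = D) //; apply: funext => p; rewrite asboolE.
by exists (PTheory DP'); split=> [p /G0D /asboolP|]; last apply/asboolP.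
Qed.

Lemma ptheory_extension_imp (G0 : form -> Prop) a b : ~ derivable G0 (FImp a b) ->
  exists D : ptheory, [/\ forall p, G0 p -> D p, D a & ~~ D b].
Proof.
move=> nab; have /ptheory_extension [D [G0aD Db]] :
    ~ derivable (fun q => G0 q \/ q = a) b by move/deduction.
by exists D; split=> [p G0p||//]; apply: G0aD; [left|right].
Qed.

Lemma pt_le_anti G D : pt_le G D -> pt_le D G -> G = D.
Proof.
case: G D => [g gP] [d dP] /= gd dg.
have ed : g = d by apply: funext => p; apply/idP/idP; [apply: gd|apply: dg].
by subst d; rewrite (Prop_irrelevance gP dP).
Qed.

Lemma ptheory_type (G : ptheory) : is_type LDia (pt_neg G) G.
Proof.
have GP := ptheoryP G; rewrite /pt_neg; split; split.
- by move=> p [/negP].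
- by move=> p; split=> // _; case: (G p); [right|left].
- by case: GP.
- by move=> p q _; exact: (theory_and GP p q).
- by move=> p q _; exact: (theory_or GP p q).
- move=> p q pq; case Gp: (G p); last by left.
  by right; exact: (theory_mp GP pq Gp).
- by move=> p; apply: contraNN; apply: (theory_ITL_imp GP (ITL_dia_intro p)).
Qed.

Lemma ptheory_frame : labelled_frame LDia pt_le pt_neg ptmem.
Proof.
split; split.
- by move=> G p.
- exact: pt_le_anti.
- by move=> G D E GD DE p /GD /DE.
- exact: ptheory_type.
- by move=> G D p; apply.
- move=> G p q /negP npq.
  have [D [GD Dp Dq]] : exists D : ptheory, [/\ pt_le G D, D p & ~~ D q].
    by apply: ptheory_extension_imp => /(theory_derivable (ptheoryP G)).
  by exists D.
Qed.

Lemma pt_shift_sensible (G : ptheory) :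
  S_T (pt_neg G) G (pt_neg (pt_shift G)) (pt_shift G).
Proof.
have GP := ptheoryP G; rewrite /pt_neg; split=> //= p.
- by move=> /(theory_ITL_imp GP (ITL_dia_unfold p)) /(theory_or GP) [->|].
- exact: contraNN (theory_ITL_imp GP (ITL_next_dia p)).
Qed.

Lemma canonical_quasimodel : weak_quasimodel LDia pt_le pt_succ pt_neg ptmem.
Proof.
split; first exact: ptheory_frame.
- by move=> G G' _ GG' ->; exists (pt_shift G'); split=> // p; apply: GG'.
- by move=> G _ ->; apply: pt_shift_sensible.
Qed.

Lemma pt_succ_deterministic : deterministic pt_succ.
Proof. by move=> G; exists (pt_shift G). Qed.

Lemma ptheory_nonthm p : ~ ITL p -> exists D : ptheory, ~~ D p.
Proof.
move=> np; have [|D [_ Dp]] := @ptheory_extension (fun _ => False) p; last by exists D.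
by move=> dp; apply: np; apply: derivable_ITL dp => q [].
Qed.

Lemma ptheory_nonthm_imp a b : ~ ITL (FImp a b) -> exists D : ptheory, D a /\ ~~ D b.
Proof.
move=> nab; have [|D [_ Da Db]] := @ptheory_extension_imp (fun _ => False) a b.
  by move=> dab; apply: nab; apply: derivable_ITL dab => q [].
by exists D.
Qed.

(** * Simulating a finite quasimodel into prime theories *)

Section SimulationIntoTheories.
Variables (Sig : seq form) (W : finType) (le : rel W) (neg pos : W -> form -> bool).
Hypothesis frame : labelled_frame (fun p => List.In p Sig) (fun x y => le x y) neg pos.

Local Notation sim := (simulates (fun x y => le x y) neg pos pt_le pt_neg ptmem).
Local Notation sN := (simN Sig le neg pos).
Local Notation P := (Pset Sig le neg pos).

Lemma frame_refl x : le x x.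
Proof. by case: frame => [[]]. Qed.

Lemma frame_anti x y : le x y -> le y x -> x = y.
Proof. by case: frame => [[_ anti _] _]; apply: anti. Qed.

Lemma frame_trans x y z : le x y -> le y z -> le x z.
Proof. by case: frame => [[_ _ trans] _]; apply: trans. Qed.

Lemma frame_Sig x p : List.In p Sig <-> neg x p \/ pos x p.
Proof. by case: frame => _ [/(_ x) [[_ SigE _ _] _] _ _]. Qed.

Lemma frame_neg_of_not_pos x p : List.In p Sig -> ~~ pos x p -> neg x p.
Proof. by move/(frame_Sig x) => [//|->]. Qed.

Definition height (x : W) : nat := #|[set v | le x v]|.

Lemma height_gt0 x : 0 < height x.
Proof. by apply/card_gt0P; exists x; rewrite inE; apply: frame_refl. Qed.

Lemma height_lt x v : le x v -> v != x -> height v < height x.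
Proof.
move=> xv vx; apply/proper_card/properP; split.
  by apply/subsetP => u; rewrite !inE; apply: frame_trans.
exists x; rewrite !inE ?frame_refl //; apply: contra vx => vx'.
by rewrite (frame_anti xv vx').
Qed.

Lemma height_le_card x : height x <= #|W|.
Proof. exact: max_card. Qed.

Lemma sim_label x (G : ptheory) : sim x G ->
  (forall p, neg x p -> ~~ G p) /\ (forall p, pos x p -> G p).
Proof. by case=> E [[_ E_lab] /E_lab]. Qed.

Lemma simN_notin_sim n x (G : ptheory) : height x <= n -> sim x G -> ~~ G (sN n x).
Proof.
elim: n x G => [|n IH] x G hx xG; first by move: hx; rewrite leqNgt height_gt0.
have GP := ptheoryP G; have [negG posG] := sim_label xG.
apply/negP => Gsim.
have Gpos : G (bigAnd (filter (pos x) Sig)).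
  by apply/(theory_bigAnd GP) => p; rewrite mem_filter => /andP [/posG].
case/(theory_or GP): (theory_mp GP Gsim Gpos) => /(theory_bigOr GP) [q].
  by rewrite mem_filter => /andP [/negG /negP].
case/mapP => v; rewrite mem_filter => /andP [/andP [xv vx] _] -> Gv.
have [E [E_sim xEG]] := xG; have [D [GD vED]] := E_sim.1 _ _ _ xEG xv.
have vD : sim v D by exists E.
by move/negP: (IH v D (leq_trans (height_lt xv vx) hx) vD); apply; apply: GD.
Qed.

(* [D] falsifies the implication [sN m.+1 x] disjunct by disjunct. *)
Definition refutes (m : nat) (x : W) (D : ptheory) : Prop :=
  [/\ forall p, pos x p -> D p, forall p, neg x p -> ~~ D p
    & forall v, le x v -> v != x -> ~~ D (sN m v)].

Lemma refutes_ext m x (G : ptheory) :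
  ~~ G (sN m.+1 x) -> exists2 D, pt_le G D & refutes m x D.
Proof.
move/negP => nG; have /ptheory_extension_imp : ~ derivable (fun p => G p) (sN m.+1 x).
  by move/(theory_derivable (ptheoryP G)).
case => D [GD Dpos Dsim]; have DP := ptheoryP D.
exists D => //; split.
- move=> p px; move/(theory_bigAnd DP): Dpos; apply.
  by rewrite mem_filter px; apply/InP/(frame_Sig x); right.
- move=> p px; apply: contra Dsim => Dp; apply/(theory_or DP); left.
  apply/(theory_bigOr DP); exists p => //.
  by rewrite mem_filter px; apply/InP/(frame_Sig x); left.
- move=> v xv vx; apply: contra Dsim => Dv; apply/(theory_or DP); right.
  apply/(theory_bigOr DP); exists (sN m v) => //.
  by apply: map_f; rewrite mem_filter xv vx mem_enum.
Qed.

Definition refuting (x : W) (D : ptheory) : Prop :=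
  exists m, height x <= m.+1 /\ refutes m x D.

(* For [x < x'], [D] omits [Sim x'] at level [m], so [refutes_ext] extends it to a
   theory refuting [x'] at level [m - 1]; heights decrease, so the bound is kept. *)
Lemma refuting_simulation :
  simulation (fun x y => le x y) neg pos pt_le pt_neg ptmem refuting.
Proof.
split=> [x x' D [m [hx rD]] xx'|x D [m [_ [Dpos Dneg _]]]]; last by split.
case: (eqVneq x' x) => [->|x'x]; first by exists D; split=> [p //|]; exists m.
have {rD} [_ _ Dup] := rD; have hx' := leq_trans (height_lt xx' x'x) hx.
case: m hx Dup hx' => [|m] _ Dup hx'; first by move: hx'; rewrite ltnS leqNgt height_gt0.
have [D' DD' rD'] := refutes_ext (Dup _ xx' x'x).
by exists D'; split=> //; exists m.
Qed.

Lemma sim_of_notin_simN n x (G : ptheory) :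
  height x <= n -> ~~ G (sN n x) -> exists2 D, pt_le G D & sim x D.
Proof.
case: n => [|n] hx.
  by move/negP; case; apply: (theory_ITL (ptheoryP G)); apply: ITL_imp_refl.
case/refutes_ext => D GD rD; exists D => //.
by exists refuting; split; [apply: refuting_simulation|exists n].
Qed.

Lemma P_sim x : P x <-> exists G, sim x G.
Proof.
split=> [/ptheory_nonthm [G nG]|[G xG] thm].
  by have [D _ xD] := sim_of_notin_simN (height_le_card x) nG; exists D.
have := simN_notin_sim (height_le_card x) xG.
by rewrite (theory_ITL (ptheoryP G) thm).
Qed.

Section ReachableDiamond.
Variables (S : rel W) (w : W) (psi : form).
Hypothesis dyn : dynamic (fun x y => S x y) pt_succ sim.
Hypothesis psi_Sig : List.In psi Sig.

Local Notation R := (reachIn P (fun x y => S x y) w).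

Hypothesis no_psi : forall v, R v -> ~~ pos v psi.

Definition Sim_reachable : form :=
  bigAnd [seq Sim Sig le neg pos v | v <- enum W & `[< R v >]].

Lemma Sim_reachable_notin_sim v (D : ptheory) : R v -> sim v D -> ~~ D Sim_reachable.
Proof.
move=> Rv vD; apply: contra (simN_notin_sim (height_le_card v) vD).
move/(theory_bigAnd (ptheoryP D)); apply; apply: map_f.
by rewrite mem_filter mem_enum andbT; apply/asboolP.
Qed.

Lemma sim_of_notin_Sim_reachable (G : ptheory) :
  ~~ G Sim_reachable -> exists v D, [/\ R v, pt_le G D & sim v D].
Proof.
move/negP; rewrite (theory_bigAnd (ptheoryP G)) => /existsNP [p /not_implyP [pR /negP nGp]].
case/mapP: pR => v; rewrite mem_filter => /andP [/asboolP Rv _] pE; rewrite {}pE in nGp.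
by have [D GD vD] := sim_of_notin_simN (height_le_card v) nGp; exists v, D.
Qed.

Lemma psi_notin_sim v (D : ptheory) : R v -> sim v D -> ~~ D psi.
Proof. by move=> Rv /sim_label [negD _]; apply/negD/frame_neg_of_not_pos/no_psi. Qed.

Lemma ITL_psi_Sim_reachable : ITL (FImp psi Sim_reachable).
Proof.
apply: contrapT => /ptheory_nonthm_imp [X [Xpsi Xphi]].
have [v [D [Rv XD vD]]] := sim_of_notin_Sim_reachable Xphi.
by move/negP: (psi_notin_sim Rv vD); apply; apply: XD.
Qed.

(* Dynamicity gives an S-successor [v'] of [v] simulating [pt_shift D]; [v'] is in P,
   hence in [R w]. *)
Lemma ITL_next_Sim_reachable : ITL (FImp (FNext Sim_reachable) Sim_reachable).
Proof.
apply: contrapT => /ptheory_nonthm_imp [X [Xnext Xphi]].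
have [v [D [Rv XD vD]]] := sim_of_notin_Sim_reachable Xphi.
have [v' [vv' v'D]] := dyn vD (erefl (pt_shift D)).
have Rv' : R v' by apply: reach_step Rv vv' _; apply/P_sim; exists (pt_shift D).
by move/negP: (Sim_reachable_notin_sim Rv' v'D); apply; apply: XD.
Qed.

Lemma P_not_pos_dia : P w -> ~~ pos w (FDia psi).
Proof.
move=> Pw; apply/negP => wdia; have [G wG] := (P_sim w).1 Pw.
have ITL_dia := ITL_imp_trans (r_DiaMono ITL_psi_Sim_reachable) (r_DiaInd ITL_next_Sim_reachable).
move/negP: (Sim_reachable_notin_sim (reach_refl _ Pw) wG); apply.
exact: (theory_ITL_imp (ptheoryP G) ITL_dia ((sim_label wG).2 _ wdia)).
Qed.

End ReachableDiamond.

End SimulationIntoTheories.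

Theorem proposition7p3
  (Sig : seq form) (W : finType) (le S : rel W) (neg pos : W -> form -> bool) :
  subformula_closed Sig ->
  weak_quasimodel (fun p => List.In p Sig)
    (fun x y => le x y) (fun x y => S x y) neg pos ->
  (forall (A : Type) (leA SA : A -> A -> Prop) (negA posA : A -> form -> bool),
     weak_quasimodel LDia leA SA negA posA ->
     deterministic SA ->
     let E := simulates (fun x y => le x y) neg pos leA negA posA in
     [/\ simulation (fun x y => le x y) neg pos leA negA posA E,
         dynamic (fun x y => S x y) SA E
       & surjective_rel E]) ->
  forall (w : W) (psi : form),
    Pset Sig le neg pos w ->
    pos w (FDia psi) ->
    exists v, reachIn (Pset Sig le neg pos) (fun x y => S x y) w v /\ pos v psi.
Proof.
move=> Sig_closed [frame _ _] universal w psi Pw wdia.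
have [_ dyn _] := universal _ _ _ _ _ canonical_quasimodel pt_succ_deterministic.
have psi_Sig : List.In psi Sig.
  by apply: (Sig_closed (FDia psi)); apply/(frame_Sig frame w); right.
apply: contrapT => none; have no_psi v : reachIn (Pset Sig le neg pos) (fun x y => S x y) w v -> ~~ pos v psi.
  by move=> Rv; apply/negP => vpsi; apply: none; exists v.
by move/negP: (P_not_pos_dia frame dyn psi_Sig no_psi Pw).
Qed.
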